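(* Consider the ergodic Markov process described in the context. The dimension of the (complex) vector space of absolutely convergent solutions $q:W\to\mathbb C$ of the inner equations is at most $2^cK$.
   Context: Fix integers $c\ge 1$ and $K\ge 1$. Consider an irreducible continuous-time Markov process on the state space $V\cup W$, where $V$ is a finite set and $W=\{\mathbf n=(n_0,n_1,\dots,n_c): n_0\in\{0,1,2,\dots\},\ n_i\in\{0,1\},\ i=1,\dots,c\}$. For each $i\in\{1,\dots,c\}$ and each integer $k\le K$ there are nonnegative rates $a_{k,i},b_{k,i},c_{k,i},d_{k,i}$. From a state $\mathbf n\in W$, for each $i$ and each $k\in\{-n_0,\dots,K\}$, the process jumps (changing only coordinates $0$ and $i$) from $(n_0,n_i)=(n_0,0)$ to $(n_0+k,1)$ at rate $a_{k,i}$ and to $(n_0+k,0)$ at rate $b_{k,i}$, and from $(n_0,n_i)=(n_0,1)$ to $(n_0+k,1)$ at rate $c_{k,i}$ and to $(n_0+k,0)$ at rate $d_{k,i}$; moreover from $\mathbf n$ it jumps into $V$ with total rate $\sum_{i=1}^c\sum_{k\le -n_0-1}\bigl((1-n_i)(a_{k,i}+b_{k,i})+n_i(c_{k,i}+d_{k,i})\bigr)$. There are no other transitions out of $W$. From states in $V$ no transitions are possible to states $\mathbf n\in W$ with $n_0\ge K$. All total outgoing rates are finite. The process is assumed ergodic. Let $e_i$ be the vector of length $c+1$ (indexed $0,\dots,c$) with a $1$ in position $i$ and zeros elsewhere. The inner equations are, for a function $q:W\to\mathbb C$ and all $\mathbf n\in W$ with $n_0\ge K$: \[\sum_{i=1}^c\sum_{k=-\infty}^K\bigl((1-n_i)(a_{k,i}+b_{k,i})+n_i(c_{k,i}+d_{k,i})\bigr)q(\mathbf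 n)=\sum_{i=1}^c\sum_{k=-\infty}^K\Bigl((1-n_i)\bigl(b_{k,i}q(\mathbf n-ke_0)+d_{k,i}q(\mathbf n-ke_0+e_i)\bigr)+n_i\bigl(a_{k,i}q(\mathbf n-ke_0-e_i)+c_{k,i}q(\mathbf n-ke_0)\bigr)\Bigr).\] A solution $q$ is called absolutely convergent if $\sum_{\mathbf n\in W}|q(\mathbf n)|<\infty$. *)

From Stdlib Require Import Reals ZArith Relations.
From Coquelicot Require Import Coquelicot.
From mathcomp Require Import all_boot.

Set Implicit Arguments.
Unset Strict Implicit.
Unset Printing Implicit Defensive.

(* A configuration (n_1,...,n_c) in {0,1}^c, coordinate i+1 <-> index i : 'I_c,
   n_i = 1 <-> true. *)
Definition cfg (c : nat) := {ffun 'I_c -> bool}.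
Definition Wst (c : nat) := (nat * cfg c)%type.
Definition Sst (V : finType) (c : nat) := (V + Wst c)%type.

Definition setbit (c : nat) (sg : cfg c) (i : 'I_c) (s : bool) : cfg c :=
  [ffun j => if j == i then s else sg j].

Notation "\rsum_ ( i < n ) F" := (\big[Rplus/R0]_(i < n) F)
  (at level 41, F at level 41, i, n at level 50).
Notation "\rsum_ ( i : T ) F" := (\big[Rplus/R0]_(i : T) F)
  (at level 41, F at level 41, i at level 50).

Section Rates.
Variables (c K : nat) (a b cr d : 'I_c -> Z -> R).

(* rate of the jump (n_0,n_i) = (n_0,s0) -> (n_0+k,s1) for component i:
   a_{k,i}: 0->1, b_{k,i}: 0->0, c_{k,i}: 1->1, d_{k,i}: 1->0 *)
Definition jrate (i : 'I_c) (k : Z) (s0 s1 : bool) : R :=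
  if s0 then (if s1 then cr i k else d i k) else (if s1 then a i k else b i k).

Definition trate (i : 'I_c) (k : Z) (s0 : bool) : R :=
  Rplus (jrate i k s0 true) (jrate i k s0 false).

(* Rate from n = (n0,sg) in W to m in W (m <> n):  sum over i, k in {-n0..K}
   (k = K - j, j = 0..n0+K) and target bit s1 of the jumps landing in m. *)
Definition QWW (n m : Wst c) : R :=
  \rsum_(i < c) \rsum_(j < n.1 + K + 1) \rsum_(s1 : bool)
     (if ((n.1 + K - j)%N, setbit n.2 i s1) == m
      then jrate i (Z.of_nat K - Z.of_nat j) (n.2 i) s1 else R0).

(* Total rate from n in W into V:
   sum_i sum_{k <= -n0-1} trate  (k = -n0-1-j, j >= 0). *)
Definition QWV_total (n : Wst c) : R :=
  \rsum_(i < c) Series (fun j : nat =>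
      trate i (- Z.of_nat n.1 - 1 - Z.of_nat j)%Z (n.2 i)).

(* sum_i sum_{k <= K} trate  (k = K - j, j >= 0): coefficient of q(n) in the
   left-hand side of the inner equations. *)
Definition Wtotal (sg : cfg c) : R :=
  \rsum_(i < c) Series (fun j : nat => trate i (Z.of_nat K - Z.of_nat j)%Z (sg i)).

(* The i-th summand on the right-hand side, at k = K - j, for n = (n0,sg)
   with n0 >= K (so that n0 - k = n0 - K + j >= 0). *)
Definition rhs_term (q : nat -> cfg c -> C) (n0 : nat) (sg : cfg c)
    (i : 'I_c) (j : nat) : C :=
  let k := (Z.of_nat K - Z.of_nat j)%Z in
  let m0 := (n0 - K + j)%nat in
  if sg i then
    Cplus (Cmult (RtoC (a i k)) (q m0 (setbit sg i false)))
          (Cmult (RtoC (cr i k)) (q m0 sg))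
  else
    Cplus (Cmult (RtoC (b i k)) (q m0 sg))
          (Cmult (RtoC (d i k)) (q m0 (setbit sg i true))).

(* q : W -> C solves the inner equations (for all n with n0 >= K).  The
   inner series over k are required to converge (they do automatically for
   absolutely convergent q and summable rates). *)
Definition inner_solution (q : nat -> cfg c -> C) : Prop :=
  forall (n0 : nat) (sg : cfg c), (K <= n0)%N ->
    exists l : 'I_c -> C,
      (forall i, is_series (rhs_term q n0 sg i) (l i)) /\
      Cmult (q n0 sg) (RtoC (Wtotal sg)) = \big[Cplus/RtoC 0]_(i < c) l i.

Definition abs_convergent (q : nat -> cfg c -> C) : Prop :=
  ex_series (fun n0 : nat => \rsum_(sg : cfg c) Cmod (q n0 sg)).

End Rates.

Definition lin_indep (c m : nat) (qs : 'I_m -> nat -> cfg c -> C) : Prop :=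
  forall alpha : 'I_m -> C,
    (forall n0 sg, \big[Cplus/RtoC 0]_(j < m) Cmult (alpha j) (qs j n0 sg) = RtoC 0) ->
    forall j, alpha j = RtoC 0.

Section Process.
Variables (V : finType) (c K : nat) (a b cr d : 'I_c -> Z -> R).
(* Qr x y = transition rate from x to y (only used for x <> y) *)
Variable Qr : Sst V c -> Sst V c -> R.

Definition summableS (f : Sst V c -> R) : Prop :=
  ex_series (fun n0 : nat => \rsum_(sg : cfg c) f (inr (n0, sg))).
Definition sumS (f : Sst V c -> R) : R :=
  Rplus (\rsum_(v : V) f (inl v))
        (Series (fun n0 : nat => \rsum_(sg : cfg c) f (inr (n0, sg)))).

Definition offQ (x y : Sst V c) : R := if y == x then R0 else Qr x y.
Definition outrate (x : Sst V c) : R := sumS (offQ x).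

Definition process_structure : Prop :=
  (forall i k, (k <= Z.of_nat K)%Z ->
     Rle R0 (a i k) /\ Rle R0 (b i k) /\ Rle R0 (cr i k) /\ Rle R0 (d i k)) /\
  (* finite total outgoing rates out of W *)
  (forall i, ex_series (fun j : nat => a i (Z.of_nat K - Z.of_nat j)%Z) /\
             ex_series (fun j : nat => b i (Z.of_nat K - Z.of_nat j)%Z) /\
             ex_series (fun j : nat => cr i (Z.of_nat K - Z.of_nat j)%Z) /\
             ex_series (fun j : nat => d i (Z.of_nat K - Z.of_nat j)%Z)) /\
  (forall x y, x <> y -> Rle R0 (Qr x y)) /\
  (forall n m : Wst c, n <> m ->
     Qr (inr n) (inr m) = QWW K a b cr d n m) /\
  (forall n : Wst c,
     \rsum_(v : V) Qr (inr n) (inl v) = QWV_total a b cr d n) /\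
  (forall (v : V) (n : Wst c), (K <= n.1)%N -> Qr (inl v) (inr n) = R0) /\
  (forall v : V, summableS (offQ (inl v))).

Definition qstep (x y : Sst V c) : Prop := x <> y /\ Rlt R0 (Qr x y).
Definition irreducible : Prop :=
  forall x y, clos_refl_trans (Sst V c) qstep x y.

Definition stationary (pi : Sst V c -> R) : Prop :=
  (forall x, Rle R0 (pi x)) /\ summableS pi /\ sumS pi = R1 /\
  forall y,
    summableS (fun x => if x == y then R0 else Rmult (pi x) (Qr x y)) /\
    Rmult (pi y) (outrate y) =
      sumS (fun x => if x == y then R0 else Rmult (pi x) (Qr x y)).

(* ergodic = irreducible and positive recurrent; since all jump rates here are
   uniformly bounded the process is non-explosive, and then positive
   recurrence is equivalent to the existence of a stationary distribution. *)
Definition ergodic : Prop := irreducible /\ exists pi, stationary pi.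

End Process.

From Pilot Require Import Defs.
From Stdlib Require Import Reals ZArith Relations.
From Coquelicot Require Import Coquelicot.
From mathcomp Require Import all_boot.

From HB Require Import structures.
From Stdlib Require Import Lra Lia.
From mathcomp Require Import zify.
From mathcomp Require all_algebra Rstruct.

(* Suppose [m > 2^c K].  Counting unknowns against equations gives a nontrivial
   real combination [Y] of the real and imaginary parts of the solutions, of
   [i] times the solutions, and of the indicators of the states of [V], such
   that [Y] vanishes at one state [s0] and satisfies the balance equation
   [Y z * outrate z = sum_u Y u Q(u, z)] at every other state of level [< K].
   At the levels [>= K] the balance equations are the inner equations, and
   no state of [V] jumps there, so [Y] is an absolutely summable function
   balanced everywhere except at [s0], where it vanishes.  Then [|Y|] is
   subinvariant, and summing over the state space shows it is invariant;
   following the jumps backwards, irreducibility spreads the zero at [s0] to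
   every state.  So [Y = 0], against the linear independence of the
   solutions. *)

Module RealMatrix.
Import all_algebra Rstruct GRing.Theory.
Local Open Scope ring_scope.

Lemma underdetermined_nontrivial (I J : finType) (A : I -> J -> R) :
  (#|J| < #|I|)%N ->
  exists beta : I -> R, (exists i, beta i <> 0) /\
    forall j, \big[Rplus/R0]_(i : I) Rmult (beta i) (A i j) = R0.
Proof.
move=> ltJI.
pose M : 'M[R]_(#|I|, #|J|) := \matrix_(i, j) A (enum_val i) (enum_val j).
have : kermx M != 0.
  rewrite kermx_eq0; apply: contraL ltJI => /row_freeP [B MB].
  have := leq_trans (mxrankM_maxl M B) (rank_leq_col M).
  by rewrite MB mxrank1 -leqNgt.
case/rowV0Pn => v /sub_kermxP vM v_neq0.
have /existsP [k vk] : [exists k, v 0 k != 0].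
  apply: contraNT v_neq0 => /existsPn v0; apply/eqP/rowP => k.
  by rewrite mxE; apply/eqP; rewrite -[_ == _]negbK v0.
exists (fun i => v 0 (enum_rank i)); split.
  by exists (enum_val k); rewrite enum_valK; apply/eqP.
move=> j; have := congr1 (fun N : 'rV[R]_#|J| => N 0 (enum_rank j)) vM.
rewrite !mxE => vMj; rewrite -[RHS]vMj [RHS](reindex enum_rank) /=; last first.
  by exists enum_val => x _; rewrite ?enum_valK ?enum_rankK.
by apply: eq_bigr => i _; rewrite mxE !enum_rankK.
Qed.
End RealMatrix.

HB.instance Definition _ := Monoid.isComLaw.Build R R0 Rplus
  (fun x y z => esym (Rplus_assoc x y z)) Rplus_comm Rplus_0_l.

Open Scope R_scope.

Lemma big_ge0 {T : finType} (F : T -> R) :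
  (forall i, 0 <= F i) -> 0 <= \rsum_(i : T) F i.
Proof. by move=> F_ge0; apply: (big_ind (fun x => 0 <= x)) => // *; lra. Qed.

Lemma big_le {T : finType} (F G : T -> R) :
  (forall i, F i <= G i) -> \rsum_(i : T) F i <= \rsum_(i : T) G i.
Proof. by move=> FG; apply: (big_ind2 (fun x y => x <= y)) => // *; lra. Qed.

Lemma big_term_le {T : finType} (F : T -> R) j :
  (forall i, 0 <= F i) -> F j <= \rsum_(i : T) F i.
Proof.
move=> F_ge0; rewrite (bigD1 j) //=; set rest := \big[_/_]_(_ | _) _.
have : 0 <= rest by apply: big_ind => // *; lra.
lra.
Qed.

Lemma big_Rabs {T : finType} (F : T -> R) :
  Rabs (\rsum_(i : T) F i) <= \rsum_(i : T) Rabs (F i).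
Proof.
apply: (big_ind2 (fun x y => Rabs x <= y)) => [|x y z w *|i _]; last lra.
  by rewrite Rabs_R0; lra.
by have := Rabs_triang x z; lra.
Qed.

Lemma big_scal_l {T : finType} (k : R) (F : T -> R) :
  k * (\rsum_(i : T) F i) = \rsum_(i : T) k * F i.
Proof. by apply: (big_rec2 (fun x y => k * x = y)) => [|i x y _ <-]; ring. Qed.

Lemma big_minus {T : finType} (F G : T -> R) :
  \rsum_(i : T) (F i - G i) = \rsum_(i : T) F i - \rsum_(i : T) G i.
Proof.
by apply: (big_rec3 (fun x y z => x = y - z)) => [|i x y z _ ->]; ring.
Qed.

Lemma big_ord_pick (N x : nat) (F : nat -> R) :
  \rsum_(j < N) (if x == j then F j else 0) = if (x < N)%N then F x else 0.
Proof.
case: ifP => [ltxN|/negbT]; last first.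
  by rewrite -leqNgt => leNx; apply: big1 => j _; case: eqP => // xj; move: (ltn_ord j); lia.
rewrite (bigD1 (Ordinal ltxN)) //= eqxx big1 /= ?Rplus_0_r // => j.
move=> jx; case: eqP => // xj; case/eqP: jx; apply: val_inj; exact: esym.
Qed.

Lemma sum_n_big (a : nat -> R) N : sum_n a N = \rsum_(j < N.+1) a j.
Proof.
elim: N => [|N IH]; first by rewrite sum_O big_ord_recr big_ord0 /=; ring.
by rewrite sum_Sn IH [in RHS]big_ord_recr.
Qed.

Lemma is_series_finsupp (h : nat -> R) N :
  (forall L, (N <= L)%N -> h L = 0) -> is_series h (\rsum_(L < N) h L).
Proof.
move=> h0; apply: (filterlim_ext_loc (fun _ => \rsum_(L < N) h L)); last first.
  exact: filterlim_const.
exists N => n /leP leNn; have leNSn : (N <= n.+1)%N by lia.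
rewrite sum_n_big -!(big_mkord xpredT) (@big_cat_nat _ _ _ N 0 n.+1 _ _ (leq0n N) leNSn) /=.
rewrite [X in _ = _ + X]big_nat_cond [X in _ = _ + X]big1 ?Rplus_0_r // => L /andP [/andP [NL _] _].
exact: h0.
Qed.

Lemma is_series_0 : is_series (fun _ : nat => 0) 0.
Proof. by have := is_series_finsupp (fun _ => 0) 0; rewrite big_ord0; apply. Qed.

Lemma Series_0 : Series (fun _ => 0) = 0.
Proof. exact: is_series_unique is_series_0. Qed.

Lemma is_series_delta (p : nat) (x : R) :
  is_series (fun L : nat => if L == p then x else 0) x.
Proof.
have := is_series_finsupp (fun L : nat => if L == p then x else 0) p.+1.
rewrite (eq_bigr (fun j : 'I_p.+1 => if p == j then x else 0)); last first.
  by move=> j _; rewrite eq_sym.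
by rewrite big_ord_pick ltnSn; apply=> L; case: eqP => // ->; rewrite ltnn.
Qed.

Lemma is_series_shift (G : nat -> R) s p : is_series G s ->
  is_series (fun L => if (p <= L)%N then G (L - p)%N else 0) s.
Proof.
elim: p => [|p IH] HG.
  by apply: (is_series_ext G) => // L; rewrite leq0n subn0.
apply: is_series_decr_1; rewrite /= /plus /opp /= Ropp_0 Rplus_0_r.
by apply: (is_series_ext _ _ _ _ (IH HG)) => L /=; rewrite ltnS subSS.
Qed.

Lemma is_series_big {T : finType} (h : T -> nat -> R) (l : T -> R) :
  (forall i, is_series (h i) (l i)) ->
  is_series (fun M => \rsum_(i : T) h i M) (\rsum_(i : T) l i).
Proof.
move=> hl; rewrite unlock; elim: (index_enum T) => [|x r IH] /=.
  exact: is_series_0.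
exact: is_series_plus.
Qed.

Lemma Series_big {T : finType} (h : T -> nat -> R) :
  (forall i, ex_series (h i)) ->
  Series (fun M => \rsum_(i : T) h i M) = \rsum_(i : T) Series (h i).
Proof.
by move=> hi; apply: is_series_unique; apply: is_series_big => i; exact: Series_correct.
Qed.

Section NonnegSeries.
Variable a : nat -> R.
Hypothesis a_ge0 : forall n, 0 <= a n.

Lemma sum_n_le_Series N : ex_series a -> sum_n a N <= Series a.
Proof.
move=> [l al]; rewrite (is_series_unique _ _ al).
have := is_lim_seq_le_loc (fun _ => sum_n a N) (sum_n a) (sum_n a N) l.
apply=> //; last exact: is_lim_seq_const.
exists N => n /leP; elim: n => [|n IH] leNn; first by (have -> : N = 0%N by lia); lra.
case: (Nat.eq_dec N n.+1) => [->|NSn]; first lra.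
by rewrite sum_Sn /plus /=; have := a_ge0 n.+1; have := IH ltac:(lia); lra.
Qed.

Lemma Series_ge0 : ex_series a -> 0 <= Series a.
Proof.
move=> ex_a; apply: Rle_trans (sum_n_le_Series 0 ex_a).
by rewrite sum_O.
Qed.

Lemma term_le_Series N : ex_series a -> a N <= Series a.
Proof.
move=> ex_a; apply: Rle_trans (sum_n_le_Series N ex_a).
rewrite sum_n_big big_ord_recr /=.
set init := \big[_/_]_(_ < _) _.
have : 0 <= init by apply: big_ge0.
lra.
Qed.

Lemma ex_series_bounded B : (forall N, sum_n a N <= B) ->
  ex_series a /\ Series a <= B.
Proof.
move=> aB; have ex_lim : ex_finite_lim_seq (sum_n a).
  apply: (ex_finite_lim_seq_incr _ B) => // n.
  by rewrite sum_Sn /plus /=; have := a_ge0 n.+1; lra.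
have lim_a := Lim_seq_correct' _ ex_lim.
split; first by exists (real (Lim_seq (sum_n a))).
exact: is_lim_seq_le (sum_n a) (fun _ => B) _ _ aB lim_a (is_lim_seq_const B).
Qed.
End NonnegSeries.

Lemma Series_sum_n (a : nat -> nat -> R) N : (forall m, ex_series (a m)) ->
  Series (fun n => sum_n (fun m => a m n) N) = sum_n (fun m => Series (a m)) N.
Proof.
move=> ex_rows; rewrite sum_n_big -Series_big //.
by apply: Series_ext => n; rewrite sum_n_big.
Qed.

Lemma Series_exchange_nonneg (a : nat -> nat -> R) :
  (forall m n, 0 <= a m n) -> (forall m, ex_series (a m)) ->
  ex_series (fun m => Series (a m)) ->
  (forall n, ex_series (fun m => a m n)) /\
  ex_series (fun n => Series (fun m => a m n)) /\
  Series (fun n => Series (fun m => a m n)) = Series (fun m => Series (a m)).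
Proof.
move=> a_ge0 ex_rows ex_sum.
have ex_cols n : ex_series (fun m => a m n).
  apply: (ex_series_le _ (fun m => Series (a m))) => // m.
  by rewrite /norm /= /abs /= Rabs_pos_eq //; exact: term_le_Series.
have [ex_colsum colsum_le] : ex_series (fun n => Series (fun m => a m n)) /\
    Series (fun n => Series (fun m => a m n)) <= Series (fun m => Series (a m)).
  apply: ex_series_bounded => [n|N]; first exact: Series_ge0.
  rewrite -(Series_sum_n (fun n m => a m n)) //; apply: Series_le => // m; split.
    by rewrite sum_n_big; apply: big_ge0.
  exact: sum_n_le_Series.
do 2!split => //; apply: Rle_antisym => //.
suff [_ rowsum_le] : ex_series (fun m => Series (a m)) /\
    Series (fun m => Series (a m)) <= Series (fun n => Series (fun m => a m n)) by [].
apply: ex_series_bounded => [m|M]; first exact: Series_ge0.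
rewrite -Series_sum_n //; apply: Series_le => // n; split.
  by rewrite sum_n_big; apply: big_ge0.
exact: sum_n_le_Series.
Qed.

Section StateSums.
Context {V : finType} {c : nat}.
Notation S := (Sst V c).
Implicit Types (f g : S -> R) (z u : S).

Definition Wsum f (L : nat) : R := \rsum_(sg : cfg c) f (inr (L, sg)).

(* The states of [S] are laid out as a series of finite levels indexed by
   [V + cfg c]; the states of [V] all sit on level 0. *)
Definition pad f (L : nat) (e : V + cfg c) : R :=
  match e with
  | inl v => if L is 0 then f (inl v) else 0
  | inr sg => f (inr (L, sg))
  end.

Definition level_sum f (L : nat) : R := \rsum_(e : V + cfg c) pad f L e.

Definition state_level z : nat := if z is inr n then n.1 else 0.
Definition state_index z : V + cfg c :=
  match z with inl v => inl v | inr n => inr n.2 end.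

Lemma pad_state f z : pad f (state_level z) (state_index z) = f z.
Proof. by case: z => [v|[L sg]]. Qed.

Lemma level_sumE f L :
  level_sum f L = Wsum f L + (if L == 0%N then \rsum_(v : V) f (inl v) else 0).
Proof.
rewrite /level_sum big_sumType /= Rplus_comm; congr (_ + _).
by case: L => [|L] //=; rewrite big1.
Qed.

Lemma summableS_level_sum f : summableS f <-> ex_series (level_sum f).
Proof.
have delta := is_series_delta 0 (\rsum_(v : V) f (inl v)).
split=> [[l fl]|[l fl]].
  exists (plus l (\rsum_(v : V) f (inl v))).
  by apply: is_series_ext (is_series_plus _ _ _ _ fl delta) => L; rewrite level_sumE.
exists (minus l (\rsum_(v : V) f (inl v))).
apply: is_series_ext (is_series_minus _ _ _ _ fl delta) => L.
by rewrite level_sumE /Wsum /minus /plus /opp /=; ring.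
Qed.

Lemma sumS_level_sum f : summableS f -> sumS f = Series (level_sum f).
Proof.
move=> [l fl]; symmetry; apply: is_series_unique.
rewrite /sumS (is_series_unique _ _ fl) Rplus_comm.
apply: is_series_ext (is_series_plus _ _ _ _ fl (is_series_delta 0 _)) => L.
by rewrite level_sumE.
Qed.

Lemma pad_ge0 f L e : (forall z, 0 <= f z) -> 0 <= pad f L e.
Proof. by move=> f_ge0; case: e L => [v [|L]|sg L] /=; [apply: f_ge0 | lra | apply: f_ge0]. Qed.

Lemma level_sum_ge0 f L : (forall z, 0 <= f z) -> 0 <= level_sum f L.
Proof. by move=> f_ge0; apply: big_ge0 => e; exact: pad_ge0. Qed.

Lemma sumS_ge0 f : (forall z, 0 <= f z) -> summableS f -> 0 <= sumS f.
Proof.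
move=> f_ge0 sf; rewrite sumS_level_sum //.
by apply: Series_ge0 => [L|]; [exact: level_sum_ge0 | apply/summableS_level_sum].
Qed.

Lemma le_sumS f z : (forall z, 0 <= f z) -> summableS f -> f z <= sumS f.
Proof.
move=> f_ge0 sf; rewrite sumS_level_sum // -pad_state.
apply: (Rle_trans _ (level_sum f (state_level z))); last first.
  exact: term_le_Series (fun L => level_sum_ge0 f L f_ge0) _ ((summableS_level_sum f).1 sf).
by apply: big_term_le => e; exact: pad_ge0.
Qed.

Lemma sumS_eq0 f z : (forall z, 0 <= f z) -> summableS f -> sumS f = 0 -> f z = 0.
Proof. by move=> f_ge0 sf f0; have := le_sumS f z f_ge0 sf; have := f_ge0 z; lra. Qed.

Lemma summableS_ext f g : (forall z, f z = g z) -> summableS f -> summableS g.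
Proof. by move=> fg; apply: ex_series_ext => L; apply: eq_bigr => sg _; exact: fg. Qed.

Lemma sumS_ext f g : (forall z, f z = g z) -> sumS f = sumS g.
Proof.
move=> fg; rewrite /sumS; congr (_ + _); first by apply: eq_bigr => v _.
by apply: Series_ext => L; apply: eq_bigr => sg _.
Qed.

Lemma summableS_plus f g : summableS f -> summableS g -> summableS (fun z => f z + g z).
Proof.
move=> sf sg; apply: (ex_series_ext (fun L => plus (Wsum f L) (Wsum g L))).
  by move=> L; rewrite /plus /= /Wsum big_split.
exact: ex_series_plus.
Qed.

Lemma sumS_plus f g : summableS f -> summableS g ->
  sumS (fun z => f z + g z) = sumS f + sumS g.
Proof.
move=> sf sg; rewrite /sumS big_split /=.
rewrite (Series_ext _ (fun L => Wsum f L + Wsum g L)); last by move=> L; rewrite /Wsum big_split.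
by rewrite Series_plus // /Wsum /=; ring.
Qed.

Lemma summableS_scal k f : summableS f -> summableS (fun z => k * f z).
Proof.
move=> sf; apply: (ex_series_ext (fun L => scal k (Wsum f L))); last exact: ex_series_scal.
by move=> L; rewrite /scal /= /mult /= /Wsum big_scal_l.
Qed.

Lemma sumS_scal k f : sumS (fun z => k * f z) = k * sumS f.
Proof.
rewrite /sumS -big_scal_l (Series_ext _ (fun L => k * Wsum f L)).
  by rewrite Series_scal_l /Wsum /=; ring.
by move=> L; rewrite /Wsum big_scal_l.
Qed.

Lemma sumS_minus f g : summableS f -> summableS g ->
  sumS (fun z => f z - g z) = sumS f - sumS g.
Proof.
move=> sf sg; rewrite (sumS_ext _ (fun z => f z + (-1) * g z)); last by move=> z; ring.
by rewrite sumS_plus ?sumS_scal //; [ring | exact: summableS_scal].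
Qed.

Lemma summableS_0 : summableS (fun _ : S => 0).
Proof. by exists 0; apply: is_series_ext is_series_0 => L; rewrite big1. Qed.

Lemma sumS_0 : sumS (fun _ : S => 0) = 0.
Proof.
by rewrite /sumS big1 // (Series_ext _ (fun _ => 0)) ?Series_0 => [|L]; [ring | rewrite big1].
Qed.

Lemma sumS_big (I : eqType) (r : seq I) (h : I -> S -> R) :
  (forall i, summableS (h i)) ->
  summableS (fun z => \big[Rplus/R0]_(i <- r) h i z) /\
  sumS (fun z => \big[Rplus/R0]_(i <- r) h i z) = \big[Rplus/R0]_(i <- r) sumS (h i).
Proof.
move=> sh; elim: r => [|i r [sr Er]].
  have nil0 z : 0 = \big[Rplus/R0]_(i <- [::]) h i z by rewrite big_nil.
  rewrite big_nil -(sumS_ext _ _ nil0) sumS_0.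
  by split; first exact: summableS_ext nil0 summableS_0.
have cons z : h i z + \big[Rplus/R0]_(j <- r) h j z = \big[Rplus/R0]_(j <- i :: r) h j z.
  by rewrite big_cons.
split; first exact: summableS_ext cons (summableS_plus _ _ (sh i) sr).
by rewrite -(sumS_ext _ _ cons) sumS_plus // Er big_cons.
Qed.

Lemma summableS_le f g : (forall z, Rabs (f z) <= g z) -> summableS g -> summableS f.
Proof.
move=> fg sg; apply: (ex_series_le _ (Wsum g)) => // L.
by rewrite /norm /= /abs /=; apply: Rle_trans (big_Rabs _) _; apply: big_le.
Qed.

Lemma sumS_Rabs f : summableS (fun z => Rabs (f z)) ->
  Rabs (sumS f) <= sumS (fun z => Rabs (f z)).
Proof.
move=> s_abs; rewrite /sumS; apply: Rle_trans (Rabs_triang _ _) _.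
apply: Rplus_le_compat; first exact: big_Rabs.
apply: Rle_trans (Series_Rabs _ _) _.
  apply: (ex_series_le _ (Wsum (fun z => Rabs (f z)))) => // L.
  by rewrite /norm /= /abs /= Rabs_Rabsolu; exact: big_Rabs.
by apply: Series_le => // L; split; [exact: Rabs_pos | exact: big_Rabs].
Qed.

Lemma level_sum_ext f g L : (forall z, f z = g z) -> level_sum f L = level_sum g L.
Proof. by move=> fg; apply: eq_bigr => -[v|sg] _ /=; rewrite ?fg. Qed.

Lemma le_level_sum f z : (forall z, 0 <= f z) -> f z <= level_sum f (state_level z).
Proof. by move=> f_ge0; rewrite -{1}pad_state; apply: big_term_le => e; exact: pad_ge0. Qed.

Lemma is_series_level_sum (h : S -> nat -> R) L : (forall z, ex_series (h z)) ->
  is_series (fun M => level_sum (h^~ M) L) (level_sum (fun z => Series (h z)) L).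
Proof.
move=> ex_h.
have pad_h e : is_series (fun M => pad (h^~ M) L e) (pad (fun z => Series (h z)) L e).
  by case: e L => [v [|L]|sg L] /=; [exact: Series_correct | exact: is_series_0 |
    exact: Series_correct].
exact: is_series_big.
Qed.

Lemma level_sum_exchange (g : S -> S -> R) L M :
  level_sum (fun u => level_sum (g u) L) M = level_sum (fun z => level_sum (g^~ z) M) L.
Proof.
have pad_big (F : S -> V + cfg c -> R) N e :
    pad (fun u => \rsum_(e' : V + cfg c) F u e') N e = \rsum_(e' : V + cfg c) pad (F^~ e') N e.
  by case: e N => [v [|N]|sg N] //=; rewrite big1.
rewrite /level_sum (eq_bigr _ (fun e _ => pad_big _ _ e)).
rewrite [RHS](eq_bigr _ (fun e _ => pad_big _ _ e)) [RHS]exchange_big.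
by apply: eq_bigr => e _; apply: eq_bigr => e' _; case: e e' L M => [v|sg] [v'|sg'] [|L] [|M].
Qed.

Lemma sumS_exchange_nonneg (g : S -> S -> R) :
  (forall u z, 0 <= g u z) -> (forall u, summableS (g u)) ->
  summableS (fun u => sumS (g u)) ->
  (forall z, summableS (g^~ z)) /\
  summableS (fun z => sumS (g^~ z)) /\
  sumS (fun z => sumS (g^~ z)) = sumS (fun u => sumS (g u)).
Proof.
move=> g_ge0 sg_rows sg_sum.
pose a M L := level_sum (fun u => level_sum (g u) L) M.
have a_ge0 M L : 0 <= a M L by apply: level_sum_ge0 => u; exact: level_sum_ge0.
have rows M : is_series (a M) (level_sum (fun u => sumS (g u)) M).
  rewrite (level_sum_ext _ (fun u => Series (level_sum (g u)))); last first.
    by move=> u; rewrite sumS_level_sum.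
  by apply: is_series_level_sum => u; apply/summableS_level_sum.
have [ex_cols [ex_colsum exch]] := Series_exchange_nonneg a a_ge0
  (fun M => ex_intro _ _ (rows M))
  (ex_series_ext _ _ (fun M => esym (is_series_unique _ _ (rows M)))
    ((summableS_level_sum _).1 sg_sum)).
have sg_cols z : summableS (g^~ z).
  apply/summableS_level_sum; apply: ex_series_le (ex_cols (state_level z)) => M.
  rewrite /norm /= /abs /= Rabs_pos_eq; last by apply: level_sum_ge0 => u; exact: g_ge0.
  rewrite /a level_sum_exchange.
  by apply: (le_level_sum (fun z => level_sum (g^~ z) M)) => z'; exact: level_sum_ge0.
have cols L : is_series (a^~ L) (level_sum (fun z => sumS (g^~ z)) L).
  apply: (is_series_ext (fun M => level_sum (fun z => level_sum (g^~ z) M) L)).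
    by move=> M; rewrite /a level_sum_exchange.
  rewrite (level_sum_ext _ (fun z => Series (level_sum (g^~ z)))); last first.
    by move=> z; rewrite sumS_level_sum.
  by apply: is_series_level_sum => z; apply/summableS_level_sum.
have sg_colsum : summableS (fun z => sumS (g^~ z)).
  apply/summableS_level_sum.
  exact: ex_series_ext (fun L => is_series_unique _ _ (cols L)) ex_colsum.
do 2!split => //; rewrite !sumS_level_sum //.
rewrite -(Series_ext _ _ (fun L => is_series_unique _ _ (cols L))) exch.
exact: Series_ext (fun M => is_series_unique _ _ (rows M)).
Qed.
End StateSums.

Definition inflow {V : finType} {c : nat} (Qr : Sst V c -> Sst V c -> R)
    (y : Sst V c -> R) (z : Sst V c) : R :=
  sumS (fun u => y u * offQ Qr u z).

Definition balance_defect {V : finType} {c : nat} (Qr : Sst V c -> Sst V c -> R)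
    (y : Sst V c -> R) (z : Sst V c) : R :=
  y z * outrate Qr z - inflow Qr y z.

Lemma balance_defect_scal {V : finType} {c : nat} (Qr : Sst V c -> Sst V c -> R) k y y' z :
  (forall u, y u = k * y' u) -> balance_defect Qr y z = k * balance_defect Qr y' z.
Proof.
move=> yy'; rewrite /balance_defect /inflow (sumS_ext _ (fun u => k * (y' u * offQ Qr u z))).
  by rewrite sumS_scal yy'; ring.
by move=> u; rewrite yy'; ring.
Qed.

Section RateMatrix.
Context {V : finType} {c : nat} {Qr : Sst V c -> Sst V c -> R}.
Notation S := (Sst V c).
Implicit Types (y : S -> R) (u z : S).
Hypothesis Qr_ge0 : forall u z, u <> z -> 0 <= Qr u z.

Lemma offQ_ge0 u z : 0 <= offQ Qr u z.
Proof. by rewrite /offQ; case: eqP => [_|ne]; [lra | apply: Qr_ge0 => E; apply: ne]. Qed.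

Hypothesis summableS_offQ : forall u, summableS (offQ Qr u).

Lemma offQ_le_outrate u z : offQ Qr u z <= outrate Qr u.
Proof. by apply: le_sumS; [exact: offQ_ge0 | exact: summableS_offQ]. Qed.

Lemma outrate_ge0 u : 0 <= outrate Qr u.
Proof. exact: Rle_trans (offQ_ge0 u u) (offQ_le_outrate u u). Qed.

Context {B : R}.
Hypothesis outrate_le : forall u, outrate Qr u <= B.

Lemma summableS_abs_flow y z : summableS (fun u => Rabs (y u)) ->
  summableS (fun u => Rabs (y u) * offQ Qr u z).
Proof.
move=> sy; apply: (summableS_le _ (fun u => B * Rabs (y u))); last exact: summableS_scal.
move=> u; rewrite Rabs_pos_eq; last by apply: Rmult_le_pos; [exact: Rabs_pos | exact: offQ_ge0].
have := offQ_ge0 u z; have := offQ_le_outrate u z; have := outrate_le u.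
by have := Rabs_pos (y u); nra.
Qed.

Lemma summableS_flow y z : summableS (fun u => Rabs (y u)) ->
  summableS (fun u => y u * offQ Qr u z).
Proof.
move=> sy; apply: summableS_le (summableS_abs_flow y z sy) => u.
by rewrite Rabs_mult (Rabs_pos_eq (offQ Qr u z)); [exact: Rle_refl | exact: offQ_ge0].
Qed.

(* Summing [|y z| * outrate z <= sum_u |y u| Q(u,z)] over all [z] gives an
   equality (both sides total [sum_u |y u| * outrate u]), so each of these
   inequalities is an equality. *)
Lemma abs_balance y s0 :
  summableS (fun u => Rabs (y u)) -> y s0 = 0 ->
  (forall z, z <> s0 -> y z * outrate Qr z = inflow Qr y z) ->
  forall z, Rabs (y z) * outrate Qr z = sumS (fun u => Rabs (y u) * offQ Qr u z).
Proof.
move=> sy y_s0 y_bal.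
pose g u z := Rabs (y u) * offQ Qr u z.
have g_ge0 u z : 0 <= g u z by apply: Rmult_le_pos; [exact: Rabs_pos | exact: offQ_ge0].
have out_g u : sumS (g u) = Rabs (y u) * outrate Qr u by rewrite sumS_scal.
have sg_sum : summableS (fun u => sumS (g u)).
  apply: (summableS_le _ (fun u => B * Rabs (y u))); last exact: summableS_scal.
  move=> u; rewrite out_g Rabs_pos_eq; last first.
    by apply: Rmult_le_pos; [exact: Rabs_pos | exact: outrate_ge0].
  by have := outrate_le u; have := Rabs_pos (y u); nra.
have [sg_cols [sg_colsum exch]] := sumS_exchange_nonneg g g_ge0
  (fun u => summableS_scal _ _ (summableS_offQ u)) sg_sum.
have sub_bal z : Rabs (y z) * outrate Qr z <= sumS (g^~ z).
  case: (eqVneq z s0) => [->|ne]; first rewrite y_s0 Rabs_R0 Rmult_0_l.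
    by apply: sumS_ge0 => [u|]; [exact: g_ge0 | exact: sg_cols].
  rewrite -[outrate Qr z]Rabs_pos_eq; last exact: outrate_ge0.
  rewrite -Rabs_mult y_bal; last exact/eqP.
  have abs_flow u : Rabs (y u * offQ Qr u z) = g u z.
    by rewrite Rabs_mult (Rabs_pos_eq (offQ Qr u z)) //; exact: offQ_ge0.
  rewrite -(sumS_ext _ _ abs_flow); apply: sumS_Rabs.
  exact: summableS_ext (fun u => esym (abs_flow u)) (sg_cols z).
have s_out : summableS (fun z => Rabs (y z) * outrate Qr z).
  exact: summableS_ext out_g sg_sum.
have D_ge0 z : 0 <= sumS (g^~ z) - Rabs (y z) * outrate Qr z by have := sub_bal z; lra.
have D_sum : summableS (fun z => sumS (g^~ z) - Rabs (y z) * outrate Qr z).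
  by apply: summableS_ext (summableS_plus _ _ sg_colsum (summableS_scal (-1) _ s_out)) => z; ring.
move=> z; change (Rabs (y z) * outrate Qr z = sumS (g^~ z)).
have := sumS_eq0 _ z D_ge0 D_sum.
rewrite sumS_minus // exch (sumS_ext _ _ out_g) Rminus_eq_0 => /(_ erefl).
lra.
Qed.

Lemma balanced_eq0 y s0 : irreducible Qr ->
  summableS (fun u => Rabs (y u)) -> y s0 = 0 ->
  (forall z, z <> s0 -> y z * outrate Qr z = inflow Qr y z) ->
  forall z, y z = 0.
Proof.
move=> irr sy y_s0 y_bal z; have bal := abs_balance _ _ sy y_s0 y_bal.
have step u x : qstep Qr u x -> y x = 0 -> y u = 0.
  move=> [ne Q_pos] yx; apply: Rabs_eq_0.
  have : Rabs (y u) * offQ Qr u x = 0.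
    apply: (sumS_eq0 (fun u => Rabs (y u) * offQ Qr u x)) => [u'||].
    - by apply: Rmult_le_pos; [exact: Rabs_pos | exact: offQ_ge0].
    - exact: summableS_abs_flow.
    - by rewrite -bal yx Rabs_R0 Rmult_0_l.
  rewrite /offQ; case: eqP => [E|_]; first by case: ne.
  by case/Rmult_integral => // Q0; move: Q_pos; rewrite Q0; lra.
elim: (irr z s0) y_s0 => [u x ux|//|u x w _ IHux _ IHxw]; first exact: step.
by move/IHxw/IHux.
Qed.
End RateMatrix.

Section Configurations.
Context {c : nat}.
Implicit Types (sg : cfg c) (i : 'I_c).

Lemma setbit_i sg i s : setbit sg i s i = s.
Proof. by rewrite /setbit ffunE eqxx. Qed.

Lemma setbit_setbit sg i s t : setbit (setbit sg i s) i t = setbit sg i t.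
Proof. by apply/ffunP => j; rewrite !ffunE; case: (j == i). Qed.

Lemma setbit_id sg i : setbit sg i (sg i) = sg.
Proof. by apply/ffunP => j; rewrite !ffunE; case: eqP => [->|]. Qed.

Lemma setbit_inj sg i : injective (setbit sg i).
Proof. by move=> s t /(congr1 (fun sg' : cfg c => sg' i)); rewrite !setbit_i. Qed.

Lemma sum_setbit_eq i sg s (H : cfg c -> R) :
  \rsum_(sg' : cfg c) (if setbit sg' i s == sg then H sg' else 0) =
  if sg i == s then H (setbit sg i true) + H (setbit sg i false) else 0.
Proof.
case: eqP => [<-|sg_i]; last first.
  by apply: big1 => sg' _; case: eqP => // E; case: sg_i; rewrite -E setbit_i.
have ne_tf : setbit sg i true != setbit sg i false by apply/eqP => /setbit_inj.
rewrite (bigD1 (setbit sg i true)) // (bigD1 (setbit sg i false)) /=; last by rewrite eq_sym.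
rewrite !setbit_setbit setbit_id eqxx big1 /=; first ring.
move=> sg' /andP [ne_t ne_f]; case: eqP => // E.
move: ne_t ne_f; rewrite -E !setbit_setbit.
by case: (sg' i) (setbit_id sg' i) => ->; rewrite eqxx.
Qed.

Lemma sum_setbit i sg (G : cfg c -> bool -> R) :
  \rsum_(sg' : cfg c) \rsum_(s : bool) (if setbit sg' i s == sg then G sg' s else 0) =
  G (setbit sg i true) (sg i) + G (setbit sg i false) (sg i).
Proof. by rewrite exchange_big big_bool /= !sum_setbit_eq; case: (sg i); rewrite eqxx /=; ring. Qed.
End Configurations.

Lemma sum_pair_eq {c : nat} (n : Wst c) L (x : R) :
  \rsum_(sg : cfg c) (if (L, sg) == n then x else 0) = if L == n.1 then x else 0.
Proof.
case: n => n1 n2 /=; case: eqP => [->|ne_L]; last first.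
  by apply: big1 => sg _; rewrite xpair_eqE; case: eqP.
rewrite (bigD1 n2) //= eqxx big1 ?Rplus_0_r // => sg ne.
by rewrite xpair_eqE eqxx (negbTE ne).
Qed.

Section Rates.
Context {V : finType} {c K : nat} {a b cr d : 'I_c -> Z -> R}.
Context {Qr : Sst V c -> Sst V c -> R}.
Hypothesis Hs : process_structure K a b cr d Qr.
Notation jrate := (jrate a b cr d).
Notation trate := (trate a b cr d).
Notation QWW := (QWW K a b cr d).
Notation Wtotal := (Wtotal K a b cr d).

Lemma Qr_ge0 x y : x <> y -> 0 <= Qr x y.
Proof. by case: Hs => _ [_ [Qr_ge0 _]]; exact: Qr_ge0. Qed.

Lemma Qr_WW (n m : Wst c) : n <> m -> Qr (inr n) (inr m) = QWW n m.
Proof. by case: Hs => _ [_ [_ [QW _]]]; exact: QW. Qed.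

Lemma Qr_V_high (v : V) (n : Wst c) : (K <= n.1)%N -> Qr (inl v) (inr n) = 0.
Proof. by case: Hs => _ [_ [_ [_ [_ [noVW _]]]]]; exact: noVW. Qed.

Lemma jrate_ge0 i k s0 s1 : (k <= Z.of_nat K)%Z -> 0 <= jrate i k s0 s1.
Proof.
case: Hs => rates_ge0 _ /(rates_ge0 i) [? [? [? ?]]].
by rewrite /Defs.jrate; case: s0; case: s1.
Qed.

Lemma trate_ge0 i k s : (k <= Z.of_nat K)%Z -> 0 <= trate i k s.
Proof.
move=> kK; rewrite /Defs.trate.
by have := jrate_ge0 i k s true kK; have := jrate_ge0 i k s false kK; lra.
Qed.

Lemma ex_series_trate i s : ex_series (fun j : nat => trate i (Z.of_nat K - Z.of_nat j)%Z s).
Proof.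
case: Hs => _ [/(_ i) [ex_a [ex_b [ex_c ex_d]]] _].
by rewrite /Defs.trate /Defs.jrate; case: s; apply: ex_series_plus.
Qed.

Lemma Wtotal_ge0 sg : 0 <= Wtotal sg.
Proof.
apply: big_ge0 => i; apply: Series_ge0 => [j|]; last exact: ex_series_trate.
by apply: trate_ge0; lia.
Qed.

Lemma QWW_ge0 n m : 0 <= QWW n m.
Proof.
apply: big_ge0 => i; apply: big_ge0 => j; apply: big_ge0 => s1.
by case: ifP => _; [apply: jrate_ge0; lia | lra].
Qed.

(* Total rate of the jumps out of [n] that stay in [W] (the one back to [n]
   included). *)
Definition Wstay_rate (n : Wst c) : R :=
  \rsum_(i < c) \rsum_(j < n.1 + K + 1) trate i (Z.of_nat K - Z.of_nat j) (n.2 i).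

Lemma is_series_QWW (n : Wst c) :
  is_series (fun L => \rsum_(sg : cfg c) QWW n (L, sg)) (Wstay_rate n).
Proof.
apply: (is_series_ext (fun L => \rsum_(i < c) \rsum_(j < n.1 + K + 1) \rsum_(s1 : bool)
    (if L == (n.1 + K - j)%N then jrate i (Z.of_nat K - Z.of_nat j) (n.2 i) s1 else 0))).
  move=> L; symmetry; rewrite /Defs.QWW exchange_big; apply: eq_bigr => i _.
  rewrite exchange_big; apply: eq_bigr => j _; rewrite exchange_big; apply: eq_bigr => s1 _.
  rewrite (bigD1 (setbit n.2 i s1)) //= xpair_eqE eqxx andbT eq_sym big1 ?Rplus_0_r //.
  move=> sg ne_sg; rewrite xpair_eqE; case: eqP => //= _.
  by case: eqP => // E; rewrite E eqxx in ne_sg.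
apply: is_series_big => i; apply: is_series_big => j.
rewrite /Defs.trate -big_bool; apply: is_series_big => s1.
exact: is_series_delta.
Qed.

Lemma Wtotal_split (n : Wst c) :
  Wtotal n.2 = Wstay_rate n + QWV_total a b cr d n.
Proof.
rewrite /Wtotal /Wstay_rate /QWV_total -big_split /=; apply: eq_bigr => i _.
rewrite (Series_incr_n _ (n.1 + K + 1)); [|lia|exact: ex_series_trate].
rewrite -sum_n_Reals sum_n_big (_ : (n.1 + K + 1).-1.+1 = n.1 + K + 1)%N; last lia.
by congr (_ + _); apply: Series_ext => j; congr trate; lia.
Qed.

Lemma outrate_W (n : Wst c) :
  summableS (offQ Qr (inr n)) /\ outrate Qr (inr n) = Wtotal n.2 - QWW n n.
Proof.
have offQ_WW L sg : offQ Qr (inr n) (inr (L, sg)) =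
    QWW n (L, sg) - (if (L, sg) == n then QWW n n else 0).
  rewrite /offQ; case: eqP => [[->]|ne]; first by rewrite eqxx; ring.
  rewrite Qr_WW => [|E]; last by apply: ne; rewrite E.
  by case: eqP => [E|_]; [case: ne; rewrite E | ring].
have ser : is_series (Wsum (offQ Qr (inr n))) (Wstay_rate n - QWW n n).
  apply: (is_series_ext (fun L => plus (\rsum_(sg : cfg c) QWW n (L, sg))
      (opp (if L == n.1 then QWW n n else 0)))).
    by move=> L; rewrite /Wsum (eq_bigr _ (fun sg _ => offQ_WW L sg)) big_minus sum_pair_eq.
  apply: is_series_plus; [exact: is_series_QWW | apply: is_series_opp; exact: is_series_delta].
split; first by eexists; exact: ser.
rewrite /outrate /sumS (is_series_unique _ _ ser) Wtotal_split.
have -> : \rsum_(v : V) offQ Qr (inr n) (inl v) = QWV_total a b cr d n.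
  by case: Hs => _ [_ [_ [_ [QWV _]]]]; rewrite -QWV; apply: eq_bigr.
ring.
Qed.

Lemma summableS_offQ x : summableS (offQ Qr x).
Proof.
case: x => [v|n]; last by case: (outrate_W n).
by case: Hs => _ [_ [_ [_ [_ [_ V_summable]]]]].
Qed.

Lemma outrate_bounded : exists B, forall x, outrate Qr x <= B.
Proof.
exists (\rsum_(v : V) outrate Qr (inl v) + \rsum_(sg : cfg c) Wtotal sg) => x.
have V_ge0 : 0 <= \rsum_(v : V) outrate Qr (inl v).
  by apply: big_ge0 => v; exact: (outrate_ge0 Qr_ge0 summableS_offQ).
have W_ge0 : 0 <= \rsum_(sg : cfg c) Wtotal sg by apply: big_ge0 => sg; exact: Wtotal_ge0.
case: x => [v|n].
  have : outrate Qr (inl v) <= \rsum_(v : V) outrate Qr (inl v).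
    apply: (big_term_le (fun v => outrate Qr (inl v))) => v'.
    exact: (outrate_ge0 Qr_ge0 summableS_offQ).
  lra.
have [_ ->] := outrate_W n; have := QWW_ge0 n n.
have : Wtotal n.2 <= \rsum_(sg : cfg c) Wtotal sg by apply: big_term_le => sg; exact: Wtotal_ge0.
lra.
Qed.
End Rates.

Lemma sum_level_shift (L K n0 : nat) (F : nat -> R) : (K <= n0)%N ->
  \rsum_(j < L + K + 1) (if (L + K - j)%N == n0 then F j else 0) =
  if (n0 - K <= L)%N then F (L - (n0 - K))%N else 0.
Proof.
move=> Kn0; case: leqP => [le_n0K_L|lt_L_n0K]; last first.
  by apply: big1 => j _; case: eqP => // E; move: (ltn_ord j); lia.
rewrite (eq_bigr (fun j : 'I_(L + K + 1) => if (L + K - n0)%N == j then F j else 0)).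
  rewrite big_ord_pick ifT; last by apply/ltP; lia.
  by congr F; lia.
move=> j _; have jlt := ltn_ord j.
have -> // : ((L + K - j)%N == n0) = ((L + K - n0)%N == j).
by apply/eqP/eqP; lia.
Qed.

Definition rhs_termR {c : nat} (K : nat) (a b cr d : 'I_c -> Z -> R)
    (y : nat -> cfg c -> R) (n0 : nat) (sg : cfg c) (i : 'I_c) (j : nat) : R :=
  let k := (Z.of_nat K - Z.of_nat j)%Z in
  let m0 := (n0 - K + j)%N in
  if sg i then a i k * y m0 (setbit sg i false) + cr i k * y m0 sg
  else b i k * y m0 sg + d i k * y m0 (setbit sg i true).

Section HighBalance.
Context {V : finType} {c K : nat} {a b cr d : 'I_c -> Z -> R}.
Context {Qr : Sst V c -> Sst V c -> R}.
Hypothesis Hs : process_structure K a b cr d Qr.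
Notation S := (Sst V c).
Notation jrate := (jrate a b cr d).
Notation QWW := (QWW K a b cr d).
Notation rhs_termR := (rhs_termR K a b cr d).

Lemma flow_from_level (y : nat -> cfg c -> R) n0 sg L : (K <= n0)%N ->
  \rsum_(sg' : cfg c) y L sg' * QWW (L, sg') (n0, sg) =
  if (n0 - K <= L)%N then \rsum_(i < c) rhs_termR y n0 sg i (L - (n0 - K)) else 0.
Proof.
move=> Kn0; pose G i j sg' s :=
  if setbit sg' i s == sg then y L sg' * jrate i (Z.of_nat K - Z.of_nat j) (sg' i) s else 0.
rewrite (eq_bigr (fun sg' => \rsum_(i < c) \rsum_(j < L + K + 1) \rsum_(s : bool)
    (if (L + K - j)%N == n0 then G i j sg' s else 0))); last first.
  move=> sg' _; rewrite /Defs.QWW big_scal_l; apply: eq_bigr => i _.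
  rewrite big_scal_l; apply: eq_bigr => j _; rewrite big_scal_l; apply: eq_bigr => s _.
  by rewrite /G xpair_eqE; case: (_ == n0); case: (_ == sg) => /=; ring.
rewrite exchange_big (eq_bigr (fun i => if (n0 - K <= L)%N
    then rhs_termR y n0 sg i (L - (n0 - K)) else 0)); first by case: ifP => //; rewrite big1.
move=> i _; rewrite exchange_big (eq_bigr (fun j : 'I_(L + K + 1) =>
    if (L + K - j)%N == n0 then \rsum_(sg' : cfg c) \rsum_(s : bool) G i j sg' s else 0)).
  rewrite (sum_level_shift _ _ _ (fun j => \rsum_(sg' : cfg c) \rsum_(s : bool) G i j sg' s)) //.
  rewrite sum_setbit; case: ifP => // le_n0K_L.
  rewrite /rhs_termR !setbit_i (_ : n0 - K + (L - (n0 - K)) = L)%N; last lia.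
  by case: (sg i) (setbit_id sg i) => sg_id; rewrite /Defs.jrate sg_id; ring.
by move=> j _; case: eqP => // _; rewrite big1 // => sg' _; rewrite big1.
Qed.

Lemma Wsum_inflow (y : S -> R) n0 sg L : (K <= n0)%N ->
  Wsum (fun u => y u * offQ Qr u (inr (n0, sg))) L =
  (if (n0 - K <= L)%N
   then \rsum_(i < c) rhs_termR (fun m s => y (inr (m, s))) n0 sg i (L - (n0 - K)) else 0)
  - (if L == n0 then y (inr (n0, sg)) * QWW (n0, sg) (n0, sg) else 0).
Proof.
move=> Kn0; rewrite -flow_from_level // -(sum_pair_eq (n0, sg)) -big_minus.
apply: eq_bigr => sg' _; rewrite /offQ; case: eqP => [[<- <-]|ne].
  by rewrite !eqxx Rminus_eq_0 Rmult_0_r.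
rewrite (Qr_WW Hs) // => [|E]; last by apply: ne; rewrite E.
by case: eqP => [E|_]; [case: ne; rewrite E | rewrite Rminus_0_r].
Qed.

Lemma balance_of_inner (y : S -> R) n0 sg (l : 'I_c -> R) : (K <= n0)%N ->
  (forall i, is_series (rhs_termR (fun m s => y (inr (m, s))) n0 sg i) (l i)) ->
  y (inr (n0, sg)) * Wtotal K a b cr d sg = \rsum_(i < c) l i ->
  y (inr (n0, sg)) * outrate Qr (inr (n0, sg)) = inflow Qr y (inr (n0, sg)).
Proof.
move=> Kn0 ser_l eq_l.
have ser : is_series (Wsum (fun u => y u * offQ Qr u (inr (n0, sg))))
    (\rsum_(i < c) l i - y (inr (n0, sg)) * QWW (n0, sg) (n0, sg)).
  apply: is_series_ext (is_series_minus _ _ _ _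
    (is_series_shift _ _ (n0 - K) (is_series_big _ _ ser_l)) (is_series_delta n0 _)) => L.
  by rewrite Wsum_inflow.
rewrite /inflow /sumS (is_series_unique _ _ ser) -eq_l big1 => [|v _]; last first.
  by rewrite /offQ /= (Qr_V_high Hs) //; ring.
by have [_ ->] := outrate_W Hs (n0, sg); rewrite /=; ring.
Qed.
End HighBalance.

Definition part (p : bool) (z : C) : R := if p then Im z else Re z.

Lemma part_le_Cmod p z : Rabs (part p z) <= Cmod z.
Proof.
apply: Rle_trans (Rmax_Cmod z); case: p; [exact: Rmax_r | exact: Rmax_l].
Qed.

Lemma part_big p {T : finType} (F : T -> C) :
  part p (\big[Cplus/RtoC 0]_(i : T) F i) = \rsum_(i : T) part p (F i).
Proof. by apply: (big_rec2 (fun x y => part p y = x)) => [|i x y _ <-]; case: p. Qed.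

Lemma is_series_part p (a : nat -> C) l :
  is_series a l -> is_series (fun n => part p (a n)) (part p l).
Proof.
move=> al; apply: (filterlim_ext (fun N => part p (sum_n a N))).
  by move=> N; elim: N => [|N IH]; rewrite ?sum_O // !sum_Sn -IH; case: (p).
apply: filterlim_comp al _; case: l => l1 l2; case: p => /=.
  exact: continuous_snd.
exact: continuous_fst.
Qed.

Lemma inner_solution_part {c K : nat} {a b cr d : 'I_c -> Z -> R} q p n0 sg :
  inner_solution K a b cr d q -> (K <= n0)%N ->
  exists l : 'I_c -> R,
    (forall i, is_series (rhs_termR K a b cr d (fun m s => part p (q m s)) n0 sg i) (l i)) /\
    part p (q n0 sg) * Wtotal K a b cr d sg = \rsum_(i < c) l i.
Proof.
move=> q_sol Kn0; have [l [l_ser l_eq]] := q_sol n0 sg Kn0.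
exists (fun i => part p (l i)); split=> [i|].
  apply: (is_series_ext _ _ _ _ (is_series_part p _ _ (l_ser i))) => j.
  by rewrite /rhs_term /rhs_termR; case: (sg i); case: p; rewrite /= /Re /Im /=; ring.
by rewrite -part_big -l_eq; case: p; rewrite /= /Re /Im /=; ring.
Qed.

Section LowStates.
Context {V : finType} {c : nat} {Qr : Sst V c -> Sst V c -> R}.
Notation S := (Sst V c).
Implicit Types (y : S -> R) (u z : S).
Hypothesis Qr_ge0 : forall u z, u <> z -> 0 <= Qr u z.
Hypothesis summableS_offQ : forall u, summableS (offQ Qr u).
Context {B : R}.
Hypothesis outrate_le : forall u, outrate Qr u <= B.

Lemma balance_defect_sum {I : finType} (beta : I -> R) (f : I -> S -> R) z :
  (forall i, summableS (fun u => Rabs (f i u))) ->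
  balance_defect Qr (fun u => \rsum_(i : I) beta i * f i u) z =
  \rsum_(i : I) beta i * balance_defect Qr (f i) z.
Proof.
move=> sf; have flow i : summableS (fun u => beta i * (f i u * offQ Qr u z)).
  exact/summableS_scal/(summableS_flow Qr_ge0 summableS_offQ outrate_le).
rewrite /balance_defect /inflow.
rewrite (sumS_ext _ (fun u => \rsum_(i : I) beta i * (f i u * offQ Qr u z))).
  rewrite (sumS_big _ _ _ flow).2 [RHS](eq_bigr (fun i => outrate Qr z * (beta i * f i z) -
    sumS (fun u => beta i * (f i u * offQ Qr u z)))); last by move=> i _; rewrite sumS_scal; ring.
  by rewrite big_minus -big_scal_l Rmult_comm.
by move=> u; rewrite Rmult_comm big_scal_l; apply: eq_bigr => i _; ring.
Qed.

Lemma summableS_abs_sum {I : finType} (beta : I -> R) (f : I -> S -> R) :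
  (forall i, summableS (fun u => Rabs (f i u))) ->
  summableS (fun u => Rabs (\rsum_(i : I) beta i * f i u)).
Proof.
move=> sf; apply: (summableS_le _ (fun u => \rsum_(i : I) Rabs (beta i) * Rabs (f i u))).
  by move=> u; rewrite Rabs_Rabsolu; apply: Rle_trans (big_Rabs _) _; apply: big_le => i;
    rewrite Rabs_mult; exact: Rle_refl.
by apply: (sumS_big _ _ _ _).1 => i; exact: summableS_scal.
Qed.

Variable K : nat.
Hypothesis K_gt0 : (0 < K)%N.

Definition low_state (e : V + 'I_K * cfg c) : S :=
  match e with inl v => inl v | inr ks => inr (val ks.1, ks.2) end.

(* By [balanced_eq0], a summable function balanced at the levels [>= K] is
   determined by its value at [s0] and its balance defects at the other
   [#|V| + 2^c K - 1] states of [V] or of level [< K]; these are linear in the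
   function, so there are fewer equations than unknowns. *)
Lemma combination_vanishes {I : finType} (f : I -> bool -> S -> R) :
  irreducible Qr ->
  (forall i p, summableS (fun u => Rabs (f i p u))) ->
  (forall i p n, (K <= n.1)%N -> balance_defect Qr (f i p) (inr n) = 0) ->
  (2 * (#|V| + 2 ^ c * K) < #|I|)%N ->
  exists2 beta : I -> R, exists i, beta i <> 0 &
    forall p u, \rsum_(i : I) beta i * f i p u = 0.
Proof.
move=> irr sf f_high card_I.
pose s0 : S := inr (0%N, [ffun=> false]).
pose A i (ep : (V + 'I_K * cfg c) * bool) :=
  if low_state ep.1 == s0 then f i ep.2 s0 else balance_defect Qr (f i ep.2) (low_state ep.1).
have card_eqs : (#|{: (V + 'I_K * cfg c) * bool}| < #|I|)%N.
  by rewrite card_prod card_sum card_prod card_bool card_ord /cfg card_ffun card_bool card_ord; lia.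
have [beta [nz ker]] := RealMatrix.underdetermined_nontrivial _ _ A card_eqs.
exists beta => // p; apply: (balanced_eq0 Qr_ge0 summableS_offQ outrate_le _ s0 irr).
- exact: summableS_abs_sum.
- by have := ker (inr (Ordinal K_gt0, [ffun=> false]), p); rewrite /A /= eqxx.
move=> z z_s0; apply: Rminus_diag_uniq; rewrite -/(balance_defect Qr _ z) balance_defect_sum //.
case: z z_s0 => [v|[n0 sg]] z_s0; first by have := ker (inl v, p); rewrite /A /=.
case: (ltnP n0 K) => [lt_n0K|le_Kn0]; last first.
  by apply: big1 => i _; rewrite (f_high i p (n0, sg)) // Rmult_0_r.
have := ker (inr (Ordinal lt_n0K, sg), p); rewrite /A /=.
by case: eqP => // E; case: z_s0.
Qed.
End LowStates.

Section Solutions.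
Context {V : finType} {c K : nat} {a b cr d : 'I_c -> Z -> R}.
Context {Qr : Sst V c -> Sst V c -> R}.
Hypothesis Hs : process_structure K a b cr d Qr.
Notation S := (Sst V c).
Context {m : nat}.
Variable qs : 'I_m -> nat -> cfg c -> C.
Hypothesis qs_sol : forall j, inner_solution K a b cr d (qs j) /\ abs_convergent (qs j).

Definition cbasis (x : 'I_m + V) (u : S) : C :=
  match x, u with
  | inl j, inr n => qs j n.1 n.2
  | inl _, inl _ => 0
  | inr v, u => if u == inl v then 1 else 0
  end.

(* Multiplying by [i] before taking real or imaginary parts makes the real
   combinations of the [rbasis i p] the complex combinations of the [cbasis x]. *)
Definition rbasis (i : ('I_m + V) * bool) (p : bool) (u : S) : R :=
  part p (Cmult (if i.2 then Ci else 1) (cbasis i.1 u)).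

Lemma summableS_rbasis i p : summableS (fun u => Rabs (rbasis i p u)).
Proof.
case: i => [[j|v] bb].
  apply: (summableS_le _ (fun u => Cmod (cbasis (inl j) u))); last exact: (qs_sol j).2.
  move=> [v|n]; rewrite Rabs_Rabsolu; apply: Rle_trans (part_le_Cmod _ _) _;
    rewrite Cmod_mult; case: bb; rewrite ?Cmod_Ci ?Cmod_1 Rmult_1_l; exact: Rle_refl.
exists 0; apply: is_series_ext is_series_0 => L; rewrite big1 // => sg _.
by rewrite /rbasis /=; case: bb; case: p; rewrite /= !Rmult_0_r ?Rplus_0_r ?Rminus_0_r Rabs_R0.
Qed.

Lemma rbasis_balanced i p (n : Wst c) : (K <= n.1)%N ->
  balance_defect Qr (rbasis i p) (inr n) = 0.
Proof.
case: n => n0 sg /= Kn0; case: i => [[j|v] bb]; last first.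
  rewrite /balance_defect /inflow (sumS_ext _ (fun _ => 0)) ?sumS_0.
    by rewrite /rbasis /=; case: bb; case: p; rewrite /=; ring.
  case=> [v'|n'] /=; first by rewrite /offQ /= (Qr_V_high Hs) //; ring.
  by rewrite /rbasis /=; case: bb; case: p; rewrite /=; ring.
pose y (p' : bool) (u : S) := if u is inr n then part p' (qs j n.1 n.2) else 0.
have [k [p' rb]] : exists k p', forall u, rbasis (inl j, bb) p u = k * y p' u.
  by case: bb; case: p; [exists 1, false | exists (-1), true | exists 1, true | exists 1, false];
    case=> [v|n]; rewrite /rbasis /y /= /Re /Im /=; ring.
rewrite (balance_defect_scal _ _ _ _ _ rb).
have [l [l_ser l_eq]] := inner_solution_part (qs j) p' n0 sg (qs_sol j).1 Kn0.
rewrite /balance_defect (balance_of_inner Hs (y p') n0 sg l Kn0 l_ser l_eq).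
by rewrite Rminus_eq_0 Rmult_0_r.
Qed.

Lemma rbasis_coef_eq0 (beta : ('I_m + V) * bool -> R) : lin_indep qs ->
  (forall p u, \rsum_(i : ('I_m + V) * bool) beta i * rbasis i p u = 0) ->
  forall i, beta i = 0.
Proof.
move=> indep comb.
have split_sum p u : \rsum_(i : ('I_m + V) * bool) beta i * rbasis i p u =
    \rsum_(j < m) \rsum_(bb : bool) beta (inl j, bb) * rbasis (inl j, bb) p u +
    \rsum_(v : V) \rsum_(bb : bool) beta (inr v, bb) * rbasis (inr v, bb) p u.
  rewrite (eq_bigr (fun i => beta (i.1, i.2) * rbasis (i.1, i.2) p u)) => [|[] //].
  by rewrite -(pair_bigA _ (fun x bb => beta (x, bb) * rbasis (x, bb) p u)) big_sumType.
have beta_V v bb : beta (inr v, bb) = 0.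
  have := comb bb (inl v); rewrite split_sum big1 => [|j _]; last first.
    by rewrite big_bool /rbasis /=; case: bb; rewrite /=; ring.
  rewrite (bigD1 v) //= [\big[_/_]_(v' | v' != v) _]big1 => [|v' ne]; last first.
    rewrite big_bool /rbasis /= (_ : (inl v == inl v' :> S) = false).
      by case: bb; rewrite /=; ring.
    by apply/eqP => -[E]; move: ne; rewrite E eqxx.
  by rewrite big_bool /rbasis /= eqxx; case: bb; rewrite /=; lra.
pose alpha (j : 'I_m) : C := (beta (inl j, false), beta (inl j, true)).
have alpha0 : forall j, alpha j = 0.
  apply: indep => n0 sg.
  have part0 p : part p (\big[Cplus/RtoC 0]_(j < m) Cmult (alpha j) (qs j n0 sg)) = 0.
    rewrite part_big -(comb p (inr (n0, sg))) split_sum [X in _ = _ + X]big1 ?Rplus_0_r.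
      apply: eq_bigr => j _; rewrite big_bool /rbasis /alpha /=.
      by case: p; rewrite /= /Re /Im /=; ring.
    by move=> v _; apply: big1 => bb _; rewrite beta_V Rmult_0_l.
  move: (part0 false) (part0 true); rewrite /part.
  by case: (\big[Cplus/RtoC 0]_(j < m) _) => x y /= -> ->.
by case=> [[j|v] bb]; [have := alpha0 j; case; case: bb | exact: beta_V].
Qed.
End Solutions.

Theorem corollary1 (V : finType) (c K : nat) (hc : (1 <= c)%N) (hK : (1 <= K)%N)
  (a b cr d : 'I_c -> Z -> R) (Qr : Sst V c -> Sst V c -> R)
  (Hstruct : process_structure K a b cr d Qr)
  (Herg : ergodic Qr) :
  forall (m : nat) (qs : 'I_m -> nat -> cfg c -> C),
    (forall j, inner_solution K a b cr d (qs j) /\ abs_convergent (qs j)) ->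
    lin_indep qs ->
    (m <= 2 ^ c * K)%N.
Proof.
move=> m qs qs_sol indep; rewrite leqNgt; apply/negP => lt_m.
have [B outrate_le] := outrate_bounded Hstruct.
have card_I : (2 * (#|V| + 2 ^ c * K) < #|{: ('I_m + V) * bool}|)%N.
  by rewrite card_prod card_sum card_ord card_bool; lia.
have [beta [i beta_i] comb] := combination_vanishes (Qr_ge0 Hstruct)
  (summableS_offQ Hstruct) outrate_le K hK (rbasis qs) Herg.1
  (summableS_rbasis _ qs_sol) (rbasis_balanced Hstruct _ qs_sol) card_I.
exact: beta_i (rbasis_coef_eq0 qs beta indep comb i).
Qed.
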